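(* Let $m\ge1$ and let $\phi\in C^\infty(\mathbb R^2)$ satisfy, for some $C>0$ and all $z\in\mathbb R^2$, $|D^3\phi(z)|\le C|z|^{2m-1}$, $|D^2\phi(z)|\le C|z|^{2m}$, $|D\phi(z)|\le C|z|^{2m+1}$. There exist constants $C_2>1$ and $\varepsilon_0,\varepsilon_2\in(0,1)$ such that for every $z\ne0$ there is a unit vector $u\in\mathbb S^1\subset\mathbb R^2$ such that for every $r\in(0,\varepsilon_0|z|)$ one has $B_{\mathrm{Eucl}}(z+\tfrac r2u,\varepsilon_2 r)\subset B_{\mathrm{Eucl}}(z,r)$ and $$|M(\zeta-z)|\ge C_2^{-1}|z|^{2m}r$$ for every $\zeta\in B_{\mathrm{Eucl}}(z+\tfrac r2u,\varepsilon_2r)$ and every matrix $M$ of the form $$M=\begin{bmatrix}\phi_{xx}(z')-2m|z|^{2m-2}xy & \phi_{xy}(z')-|z|^{2m-2}(|z|^2+2my^2)\\ \phi_{xy}(z'')+|z|^{2m-2}(|z|^2+2mx^2) & \phi_{yy}(z'')+2m|z|^{2m-2}xy\end{bmatrix},\qquad z=(x,y),$$ with $z',z''$ arbitrary points of the segment $[z,\zeta]$.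
   Context: $B_{\mathrm{Eucl}}(w,\rho)$ denotes the Euclidean disk in $\mathbb R^2$ of center $w$ and radius $\rho$. $|D^k\phi(z)|$ is the maximum of the absolute values of all $k$-th order partial derivatives of $\phi$ at $z$. *)

From Stdlib Require Import Reals Lra List.
Open Scope R_scope.

(* Points of R^2 are handled as pairs of coordinates (x, y); functions
   R^2 -> R are curried: f : R -> R -> R. *)

Definition norm2 (a b : R) : R := sqrt (a ^ 2 + b ^ 2).

Definition continuous2 (f : R -> R -> R) : Prop :=
  forall x y eps, 0 < eps -> exists delta, 0 < delta /\
    forall x' y', norm2 (x' - x) (y' - y) < delta ->
      Rabs (f x' y' - f x y) < eps.

Definition is_partial (b : bool) (f g : R -> R -> R) : Prop :=
  if b then forall x y, derivable_pt_lim (fun t => f t y) x (g x y)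
  else forall x y, derivable_pt_lim (fun t => f x t) y (g x y).

Fixpoint Ck (k : nat) (f : R -> R -> R) : Prop :=
  match k with
  | O => continuous2 f
  | S k' => continuous2 f /\
      exists fx fy, is_partial true f fx /\ is_partial false f fy /\
                    Ck k' fx /\ Ck k' fy
  end.

Definition smooth2 (f : R -> R -> R) : Prop := forall k, Ck k f.

(* E.g. iter_partial [true; false] f g means g = (f_x)_y = f_xy. *)
Inductive iter_partial : list bool -> (R -> R -> R) -> (R -> R -> R) -> Prop :=
| ip_nil f : iter_partial nil f f
| ip_cons b l f h g : is_partial b f h -> iter_partial l h g ->
                      iter_partial (b :: l) f g.

(* |D^k f(x,y)| <= B, i.e. every k-th order partial derivative is bounded by B
   in absolute value at (x,y). *)
Definition Dk_le (k : nat) (f : R -> R -> R) (x y B : R) : Prop :=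
  forall l g, length l = k -> iter_partial l f g -> Rabs (g x y) <= B.

From Stdlib Require Import Reals List Lra Lia FunctionalExtensionality.
Open Scope R_scope.

(* Write n = |z| and N = n^(2m). At zeta = z the two off-diagonal entries of M differ by
   n^(2m-2) (2 n^2 + 2m (x^2 + y^2)) = (2 + 2m) N, so one of them has modulus at least N,
   while both diagonal entries are at most (C + m) N. If it is the (2,1) entry, push zeta
   along u = e1: then zeta - z = (r/2, 0) + O(eps2 r), and the second row of M (zeta - z) is
   dominated by that entry times r/2. If it is the (1,2) entry, take u = e2 and the first
   row. Evaluating the second derivatives at z', z'' instead of z changes them by at most
   N/16: by the mean value theorem and the third-derivative bound on the square of
   half-side eps0 n around z, where |.| <= 2n. *)

Lemma norm2_ge0 a b : 0 <= norm2 a b.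
Proof. apply sqrt_pos. Qed.

Lemma norm2_sqr a b : norm2 a b ^ 2 = a ^ 2 + b ^ 2.
Proof. apply pow2_sqrt; nra. Qed.

Lemma norm2_le a b e : 0 <= e -> a ^ 2 + b ^ 2 <= e ^ 2 -> norm2 a b <= e.
Proof.
  intros he hab; rewrite <- (sqrt_pow2 e he).
  apply sqrt_le_1_alt; exact hab.
Qed.

Lemma norm2_pos a b : (a, b) <> (0, 0) -> 0 < norm2 a b.
Proof.
  intros hab; apply sqrt_lt_R0.
  destruct (Req_dec a 0) as [-> | ha]; [destruct (Req_dec b 0) as [-> | hb] |].
  - congruence.
  - nra.
  - nra.
Qed.

Lemma Rabs_le_norm2_l a b : Rabs a <= norm2 a b.
Proof. rewrite <- sqrt_Rsqr_abs; apply sqrt_le_1_alt; unfold Rsqr; nra. Qed.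

Lemma Rabs_le_norm2_r a b : Rabs b <= norm2 a b.
Proof. rewrite <- sqrt_Rsqr_abs; apply sqrt_le_1_alt; unfold Rsqr; nra. Qed.

Lemma norm2_le_Rabs_add a b : norm2 a b <= Rabs a + Rabs b.
Proof.
  apply norm2_le; [pose proof (Rabs_pos a); pose proof (Rabs_pos b); lra |].
  rewrite <- (pow2_abs a), <- (pow2_abs b).
  pose proof (Rabs_pos a); pose proof (Rabs_pos b); nra.
Qed.

Lemma norm2_scal k a b : norm2 (k * a) (k * b) = Rabs k * norm2 a b.
Proof.
  unfold norm2; rewrite <- sqrt_Rsqr_abs, <- sqrt_mult by (unfold Rsqr; nra).
  f_equal; unfold Rsqr; ring.
Qed.

(* Cauchy-Schwarz through Lagrange's identity
   (a^2 + b^2)(c^2 + d^2) = (a c + b d)^2 + (a d - b c)^2. *)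
Lemma norm2_triangle a b c d : norm2 (a + c) (b + d) <= norm2 a b + norm2 c d.
Proof.
  pose proof (norm2_ge0 a b); pose proof (norm2_ge0 c d).
  assert (hcs : (a * c + b * d) ^ 2 <= (norm2 a b * norm2 c d) ^ 2).
  { rewrite Rpow_mult_distr, !norm2_sqr.
    pose proof (pow2_ge_0 (a * d - b * c)); nra. }
  assert (hdot : a * c + b * d <= norm2 a b * norm2 c d).
  { assert (0 <= norm2 a b * norm2 c d) by nra.
    destruct (Rle_or_lt (a * c + b * d) (norm2 a b * norm2 c d)); nra. }
  apply norm2_le; [lra |].
  replace ((norm2 a b + norm2 c d) ^ 2)
    with (norm2 a b ^ 2 + norm2 c d ^ 2 + 2 * (norm2 a b * norm2 c d)) by ring.
  rewrite !norm2_sqr; nra.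
Qed.

Lemma norm2_1_0 : norm2 1 0 = 1.
Proof. unfold norm2; replace (1 ^ 2 + 0 ^ 2) with 1 by ring; apply sqrt_1. Qed.

Lemma norm2_0_1 : norm2 0 1 = 1.
Proof. unfold norm2; replace (0 ^ 2 + 1 ^ 2) with 1 by ring; apply sqrt_1. Qed.

Lemma norm2_lt_of_shifted_ball x y p q u1 u2 r e :
  norm2 u1 u2 = 1 -> 0 < r -> e <= / 2 ->
  norm2 (p - (x + r / 2 * u1)) (q - (y + r / 2 * u2)) < e * r ->
  norm2 (p - x) (q - y) < r.
Proof.
  intros hu hr he hpq.
  replace (p - x) with (p - (x + r / 2 * u1) + r / 2 * u1) by ring.
  replace (q - y) with (q - (y + r / 2 * u2) + r / 2 * u2) by ring.
  eapply Rle_lt_trans; [apply norm2_triangle |].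
  rewrite norm2_scal, hu, Rabs_pos_eq by lra; nra.
Qed.

Lemma norm2_le_of_box x y a b rho :
  Rabs (a - x) <= rho -> Rabs (b - y) <= rho -> rho <= norm2 x y / 2 ->
  norm2 a b <= 2 * norm2 x y.
Proof.
  intros ha hb hrho.
  replace a with (x + (a - x)) by ring; replace b with (y + (b - y)) by ring.
  eapply Rle_trans; [apply norm2_triangle |].
  pose proof (norm2_le_Rabs_add (a - x) (b - y)); lra.
Qed.

Lemma Rabs_segment_le x p t : 0 <= t <= 1 -> Rabs (x + t * (p - x) - x) <= Rabs (p - x).
Proof.
  intros ht; replace (x + t * (p - x) - x) with (t * (p - x)) by ring.
  rewrite Rabs_mult, Rabs_pos_eq by lra.
  pose proof (Rabs_pos (p - x)); nra.
Qed.

Lemma Rabs_2mul_le_sqr_add a b : Rabs (2 * a * b) <= a ^ 2 + b ^ 2.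
Proof. pose proof (pow2_ge_0 (a + b)); pose proof (pow2_ge_0 (a - b)); split_Rabs; nra. Qed.

Lemma Rminus_minus_r_r r r1 r2 : r1 - r - (r2 - r) = r1 - r2.
Proof. ring. Qed.

Lemma MVT_Rabs_le (f f' : R -> R) a b B :
  (forall t, derivable_pt_lim f t (f' t)) ->
  (forall t, Rabs (t - a) <= Rabs (b - a) -> Rabs (f' t) <= B) ->
  Rabs (f b - f a) <= B * Rabs (b - a).
Proof.
  intros hf hB.
  destruct (MVT_abs f f' a b (fun c _ => hf c)) as [c [-> hc]].
  apply Rmult_le_compat_r; [apply Rabs_pos | apply hB].
  unfold Rmin, Rmax in hc; destruct (Rle_dec a b); split_Rabs; lra.
Qed.

Definition osc_le (g : R -> R -> R) (x y rho eps : R) : Prop :=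
  forall a b, Rabs (a - x) <= rho -> Rabs (b - y) <= rho ->
    Rabs (g a b - g x y) <= eps.

Lemma osc_le_of_partials g gx gy x y rho B :
  is_partial true g gx -> is_partial false g gy ->
  (forall a b, Rabs (a - x) <= rho -> Rabs (b - y) <= rho ->
     Rabs (gx a b) <= B /\ Rabs (gy a b) <= B) ->
  osc_le g x y rho (2 * B * rho).
Proof.
  intros hgx hgy hB a b ha hb; simpl in hgx, hgy.
  assert (hB0 : 0 <= B) by (destruct (hB a b ha hb) as [h _];
                            pose proof (Rabs_pos (gx a b)); lra).
  assert (hvert : Rabs (g a b - g a y) <= B * Rabs (b - y)).
  { apply (MVT_Rabs_le (fun t => g a t) (fun t => gy a t)); [intro; apply hgy |].
    intros t ht; apply (hB a t); lra. }
  assert (hhor : Rabs (g a y - g x y) <= B * Rabs (a - x)).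
  { apply (MVT_Rabs_le (fun t => g t y) (fun t => gx t y)); [intro; apply hgx |].
    intros t ht; apply (hB t y); [lra |].
    rewrite Rminus_diag, Rabs_R0; pose proof (Rabs_pos (a - x)); lra. }
  replace (g a b - g x y) with ((g a b - g a y) + (g a y - g x y)) by ring.
  eapply Rle_trans; [apply Rabs_triang |]; nra.
Qed.

Lemma osc_le_segment g x y rho eps p q t :
  osc_le g x y rho eps -> norm2 (p - x) (q - y) <= rho -> 0 <= t <= 1 ->
  Rabs (g (x + t * (p - x)) (y + t * (q - y)) - g x y) <= eps.
Proof.
  intros hg hpq ht; apply hg.
  - eapply Rle_trans; [apply Rabs_segment_le, ht |].
    eapply Rle_trans; [apply Rabs_le_norm2_l | exact hpq].
  - eapply Rle_trans; [apply Rabs_segment_le, ht |].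
    eapply Rle_trans; [apply Rabs_le_norm2_r | exact hpq].
Qed.

Lemma is_partial_unique b f g1 g2 : is_partial b f g1 -> is_partial b f g2 -> g1 = g2.
Proof.
  intros h1 h2; apply functional_extensionality; intro x;
    apply functional_extensionality; intro y.
  destruct b; eapply uniqueness_limite; [apply h1 | apply h2 | apply h1 | apply h2].
Qed.

Lemma iter_partial_Ck l f g k : iter_partial l f g -> Ck (length l + k) f -> Ck k g.
Proof.
  induction 1 as [f | b l f h g hh _ IH]; [easy |].
  intros [_ [fx [fy [hx [hy [Cx Cy]]]]]]; apply IH.
  destruct b; [rewrite (is_partial_unique _ _ _ _ hh hx) | rewrite (is_partial_unique _ _ _ _ hh hy)];
    assumption.
Qed.

Lemma iter_partial_snoc l b f g h :
  iter_partial l f g -> is_partial b g h -> iter_partial (l ++ b :: nil) f h.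
Proof.
  induction 1; intros; simpl; econstructor; eauto.
  constructor.
Qed.

Lemma iter_partial_extend l f g :
  Ck (S (length l)) f -> iter_partial l f g ->
  exists gx gy, is_partial true g gx /\ is_partial false g gy /\
    iter_partial (l ++ true :: nil) f gx /\ iter_partial (l ++ false :: nil) f gy.
Proof.
  intros hf hg.
  assert (hg1 : Ck 1 g) by (apply (iter_partial_Ck l f); [exact hg | rewrite Nat.add_1_r; exact hf]).
  destruct hg1 as [_ [gx [gy [hx [hy _]]]]].
  exists gx, gy; repeat split; try assumption; eapply iter_partial_snoc; eassumption.
Qed.

Lemma iter_partial_osc_le l f g K k x y rho :
  Ck (S (length l)) f ->
  (forall a b, Dk_le (S (length l)) f a b (K * norm2 a b ^ k)) -> 0 <= K ->
  iter_partial l f g -> 0 <= rho <= norm2 x y / 2 ->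
  osc_le g x y rho (2 * (K * (2 * norm2 x y) ^ k) * rho).
Proof.
  intros hf hD hK hg hrho.
  destruct (iter_partial_extend l f g hf hg) as [gx [gy [hgx [hgy [hlx hly]]]]].
  apply (osc_le_of_partials g gx gy); [exact hgx | exact hgy |].
  intros a b ha hb.
  assert (hmono : K * norm2 a b ^ k <= K * (2 * norm2 x y) ^ k).
  { apply Rmult_le_compat_l; [exact hK |].
    apply pow_incr; split; [apply norm2_ge0 |].
    apply (norm2_le_of_box x y a b rho); tauto. }
  split; eapply Rle_trans; try exact hmono.
  - exact (hD a b _ gx (List.last_length l true) hlx).
  - exact (hD a b _ gy (List.last_length l false) hly).
Qed.

Lemma second_partial_osc_le m phi C l g x y :
  (1 <= m)%nat -> 0 <= C -> Ck 3 phi ->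
  (forall a b, Dk_le 3 phi a b (C * norm2 a b ^ (2 * m - 1))) ->
  length l = 2%nat -> iter_partial l phi g -> 0 < norm2 x y ->
  osc_le g x y (/ (16 * (C * 2 ^ (2 * m) + 1)) * norm2 x y) (norm2 x y ^ (2 * m) / 16).
Proof.
  intros hm hC hphi hD hl hg hn.
  set (eps0 := / (16 * (C * 2 ^ (2 * m) + 1))).
  assert (hQ : 0 < 2 ^ (2 * m)) by (apply pow_lt; lra).
  assert (hCQ : 0 <= C * 2 ^ (2 * m)) by nra.
  assert (heps0 : 0 < eps0 /\ 16 * (C * 2 ^ (2 * m) + 1) * eps0 = 1).
  { split; [apply Rinv_0_lt_compat; nra | apply Rinv_r; nra]. }
  assert (hosc := iter_partial_osc_le l phi g C (2 * m - 1) x y (eps0 * norm2 x y)).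
  rewrite hl in hosc.
  intros a b ha hb; eapply Rle_trans; [apply hosc; auto; nra |].
  assert (hpow : (2 * norm2 x y) ^ (2 * m - 1) * (2 * norm2 x y)
                 = 2 ^ (2 * m) * norm2 x y ^ (2 * m)).
  { rewrite <- Rpow_mult_distr.
    rewrite <- (pow_1 (2 * norm2 x y)) at 2.
    rewrite <- pow_add; f_equal; lia. }
  assert (hN : 0 <= norm2 x y ^ (2 * m)) by (apply pow_le; lra).
  replace (2 * (C * (2 * norm2 x y) ^ (2 * m - 1)) * (eps0 * norm2 x y))
    with (C * eps0 * (2 ^ (2 * m) * norm2 x y ^ (2 * m)))
    by (rewrite <- hpow; ring).
  assert (C * 2 ^ (2 * m) * eps0 <= / 16) by nra.
  nra.
Qed.

Lemma dominant_row_lower_bound N K e r a b a0 b0 v1 v2 :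
  0 <= N -> 0 <= K -> 0 < r -> 0 < e -> 8 * e * (K + 1) <= 1 ->
  N <= Rabs a0 -> Rabs b0 <= K * N ->
  Rabs (a - a0) <= N / 16 -> Rabs (b - b0) <= N / 16 ->
  Rabs (v1 - r / 2) < e * r -> Rabs v2 < e * r ->
  / 8 * N * r <= Rabs (a * v1 + b * v2).
Proof.
  intros hN hK hr he heK ha0 hb0 ha hb hv1 hv2.
  assert (ha' : 15 / 16 * N <= Rabs a).
  { pose proof (Rabs_triang_inv a0 a) as hinv.
    rewrite Rabs_minus_sym in hinv; lra. }
  assert (hb' : Rabs b <= (K + 1) * N).
  { replace b with (b0 + (b - b0)) by ring.
    pose proof (Rabs_triang b0 (b - b0)); lra. }
  assert (hv1' : 3 / 8 * r <= Rabs v1).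
  { assert (e <= / 8) by nra. revert hv1; split_Rabs; nra. }
  assert (hmain : 15 / 16 * N * (3 / 8 * r) <= Rabs (a * v1)).
  { rewrite Rabs_mult; apply Rmult_le_compat; nra. }
  assert (hside : Rabs (b * v2) <= / 8 * N * r).
  { rewrite Rabs_mult.
    apply Rle_trans with ((K + 1) * N * (e * r)); [apply Rmult_le_compat; try apply Rabs_pos; lra |].
    replace ((K + 1) * N * (e * r)) with (e * (K + 1) * (N * r)) by ring.
    replace (/ 8 * N * r) with (/ 8 * (N * r)) by ring.
    apply Rmult_le_compat_r; nra. }
  pose proof (Rabs_triang_inv (a * v1) (- (b * v2))) as hinv.
  rewrite Rabs_Ropp in hinv; unfold Rminus in hinv; rewrite Ropp_involutive in hinv.
  assert (0 <= N * r) by nra; lra.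
Qed.

Definition good_direction (m : nat) (phixx phixy phiyy : R -> R -> R)
    (C2 eps0 eps2 x y u1 u2 : R) : Prop :=
  forall r, 0 < r < eps0 * norm2 x y ->
    (forall p q,
       norm2 (p - (x + r / 2 * u1)) (q - (y + r / 2 * u2)) < eps2 * r ->
       norm2 (p - x) (q - y) < r) /\
    (forall p q,
       norm2 (p - (x + r / 2 * u1)) (q - (y + r / 2 * u2)) < eps2 * r ->
       forall t' t'', 0 <= t' <= 1 -> 0 <= t'' <= 1 ->
       let x' := x + t' * (p - x) in let y' := y + t' * (q - y) in
       let x'' := x + t'' * (p - x) in let y'' := y + t'' * (q - y) in
       let n := norm2 x y in
       let M11 := phixx x' y' - 2 * INR m * n ^ (2 * m - 2) * x * y in
       let M12 := phixy x' y' - n ^ (2 * m - 2) * (n ^ 2 + 2 * INR m * y ^ 2) in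
       let M21 := phixy x'' y'' + n ^ (2 * m - 2) * (n ^ 2 + 2 * INR m * x ^ 2) in
       let M22 := phiyy x'' y'' + 2 * INR m * n ^ (2 * m - 2) * x * y in
       / C2 * n ^ (2 * m) * r <=
         norm2 (M11 * (p - x) + M12 * (q - y))
               (M21 * (p - x) + M22 * (q - y))).

Section GoodDirection.

Variables (m : nat) (phixx phixy phiyy : R -> R -> R) (C eps0 eps2 x y : R).

Hypotheses (hm : (1 <= m)%nat) (hC : 0 <= C) (hn : 0 < norm2 x y)
  (hxx : Rabs (phixx x y) <= C * norm2 x y ^ (2 * m))
  (hyy : Rabs (phiyy x y) <= C * norm2 x y ^ (2 * m))
  (heps2 : 0 < eps2) (heps2C : 8 * eps2 * (C + INR m + 1) <= 1)
  (oscxx : osc_le phixx x y (eps0 * norm2 x y) (norm2 x y ^ (2 * m) / 16))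
  (oscxy : osc_le phixy x y (eps0 * norm2 x y) (norm2 x y ^ (2 * m) / 16))
  (oscyy : osc_le phiyy x y (eps0 * norm2 x y) (norm2 x y ^ (2 * m) / 16)).

Lemma pow_norm2_split : norm2 x y ^ (2 * m - 2) * (x ^ 2 + y ^ 2) = norm2 x y ^ (2 * m).
Proof using hm. rewrite <- norm2_sqr, <- pow_add; f_equal; lia. Qed.

Lemma cross_term_le :
  Rabs (2 * INR m * norm2 x y ^ (2 * m - 2) * x * y) <= INR m * norm2 x y ^ (2 * m).
Proof using hm hn.
  rewrite <- pow_norm2_split.
  assert (0 <= INR m * norm2 x y ^ (2 * m - 2)) by (apply Rmult_le_pos; [apply pos_INR | apply pow_le; lra]).
  replace (2 * INR m * norm2 x y ^ (2 * m - 2) * x * y)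
    with (INR m * norm2 x y ^ (2 * m - 2) * (2 * x * y)) by ring.
  rewrite Rabs_mult, Rabs_pos_eq by assumption.
  replace (INR m * (norm2 x y ^ (2 * m - 2) * (x ^ 2 + y ^ 2)))
    with (INR m * norm2 x y ^ (2 * m - 2) * (x ^ 2 + y ^ 2)) by ring.
  apply Rmult_le_compat_l; [assumption | apply Rabs_2mul_le_sqr_add].
Qed.

Lemma diag_xx_le :
  Rabs (phixx x y - 2 * INR m * norm2 x y ^ (2 * m - 2) * x * y)
    <= (C + INR m) * norm2 x y ^ (2 * m).
Proof using hm hn hxx.
  pose proof cross_term_le; unfold Rminus.
  eapply Rle_trans; [apply Rabs_triang |]; rewrite Rabs_Ropp; lra.
Qed.

Lemma diag_yy_le :
  Rabs (phiyy x y + 2 * INR m * norm2 x y ^ (2 * m - 2) * x * y)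
    <= (C + INR m) * norm2 x y ^ (2 * m).
Proof using hm hn hyy.
  pose proof cross_term_le.
  eapply Rle_trans; [apply Rabs_triang |]; lra.
Qed.

Lemma offdiag_dominant :
  norm2 x y ^ (2 * m) <= Rabs (phixy x y
     + norm2 x y ^ (2 * m - 2) * (norm2 x y ^ 2 + 2 * INR m * x ^ 2)) \/
  norm2 x y ^ (2 * m) <= Rabs (phixy x y
     - norm2 x y ^ (2 * m - 2) * (norm2 x y ^ 2 + 2 * INR m * y ^ 2)).
Proof using hm hn.
  set (D := phixy x y + _); set (B := phixy x y - _).
  assert (hgap : D - B = (2 + 2 * INR m) * norm2 x y ^ (2 * m)).
  { unfold D, B; rewrite <- pow_norm2_split, norm2_sqr; ring. }
  assert (hN : 0 <= norm2 x y ^ (2 * m)) by (apply pow_le; lra).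
  assert (0 <= INR m * norm2 x y ^ (2 * m)) by (apply Rmult_le_pos; [apply pos_INR | exact hN]).
  pose proof (Rabs_triang D (- B)) as htri.
  rewrite Rabs_Ropp, <- Rminus_def, hgap, Rabs_pos_eq in htri by lra.
  destruct (Rle_or_lt (norm2 x y ^ (2 * m)) (Rabs D)); [now left | right; lra].
Qed.

Lemma eps2_le_half : eps2 <= / 2.
Proof using hC heps2 heps2C. pose proof (pos_INR m); nra. Qed.

Lemma good_direction_e1 :
  norm2 x y ^ (2 * m) <= Rabs (phixy x y
     + norm2 x y ^ (2 * m - 2) * (norm2 x y ^ 2 + 2 * INR m * x ^ 2)) ->
  good_direction m phixx phixy phiyy 8 eps0 eps2 x y 1 0.
Proof using hm hC hn hyy heps2 heps2C oscxy oscyy.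
  intros hD r hr.
  assert (hball : forall p q, norm2 (p - (x + r / 2 * 1)) (q - (y + r / 2 * 0)) < eps2 * r ->
                              norm2 (p - x) (q - y) < r).
  { intros p q; apply norm2_lt_of_shifted_ball;
      [apply norm2_1_0 | lra | apply eps2_le_half]. }
  split; [exact hball |].
  intros p q hpq t' t'' ht' ht''; cbv zeta.
  assert (hbox : norm2 (p - x) (q - y) <= eps0 * norm2 x y) by (pose proof (hball p q hpq); lra).
  eapply Rle_trans; [| apply Rabs_le_norm2_r].
  eapply (dominant_row_lower_bound _ (C + INR m) eps2 r);
    [apply pow_le; lra | pose proof (pos_INR m); lra | lra | exact heps2 | lra
    | exact hD | exact diag_yy_le | .. ].
  - rewrite Rminus_plus_r_r; apply (osc_le_segment _ _ _ _ _ _ _ _ oscxy hbox ht'').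
  - rewrite Rminus_plus_r_r; apply (osc_le_segment _ _ _ _ _ _ _ _ oscyy hbox ht'').
  - replace (p - x - r / 2) with (p - (x + r / 2 * 1)) by ring.
    eapply Rle_lt_trans; [apply Rabs_le_norm2_l | exact hpq].
  - replace (q - y) with (q - (y + r / 2 * 0)) by ring.
    eapply Rle_lt_trans; [apply Rabs_le_norm2_r | exact hpq].
Qed.

Lemma good_direction_e2 :
  norm2 x y ^ (2 * m) <= Rabs (phixy x y
     - norm2 x y ^ (2 * m - 2) * (norm2 x y ^ 2 + 2 * INR m * y ^ 2)) ->
  good_direction m phixx phixy phiyy 8 eps0 eps2 x y 0 1.
Proof using hm hC hn hxx heps2 heps2C oscxx oscxy.
  intros hB r hr.
  assert (hball : forall p q, norm2 (p - (x + r / 2 * 0)) (q - (y + r / 2 * 1)) < eps2 * r ->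
                              norm2 (p - x) (q - y) < r).
  { intros p q; apply norm2_lt_of_shifted_ball;
      [apply norm2_0_1 | lra | apply eps2_le_half]. }
  split; [exact hball |].
  intros p q hpq t' t'' ht' ht''; cbv zeta.
  assert (hbox : norm2 (p - x) (q - y) <= eps0 * norm2 x y) by (pose proof (hball p q hpq); lra).
  eapply Rle_trans; [| apply Rabs_le_norm2_l].
  rewrite (Rplus_comm (_ * (p - x))).
  eapply (dominant_row_lower_bound _ (C + INR m) eps2 r);
    [apply pow_le; lra | pose proof (pos_INR m); lra | lra | exact heps2 | lra
    | exact hB | exact diag_xx_le | .. ].
  - rewrite Rminus_minus_r_r; apply (osc_le_segment _ _ _ _ _ _ _ _ oscxy hbox ht').
  - rewrite Rminus_minus_r_r; apply (osc_le_segment _ _ _ _ _ _ _ _ oscxx hbox ht').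
  - replace (q - y - r / 2) with (q - (y + r / 2 * 1)) by ring.
    eapply Rle_lt_trans; [apply Rabs_le_norm2_r | exact hpq].
  - replace (p - x) with (p - (x + r / 2 * 0)) by ring.
    eapply Rle_lt_trans; [apply Rabs_le_norm2_l | exact hpq].
Qed.

Lemma exists_good_direction :
  exists u1 u2, norm2 u1 u2 = 1 /\ good_direction m phixx phixy phiyy 8 eps0 eps2 x y u1 u2.
Proof using All.
  destruct offdiag_dominant as [hD | hB].
  - exists 1, 0; split; [apply norm2_1_0 | exact (good_direction_e1 hD)].
  - exists 0, 1; split; [apply norm2_0_1 | exact (good_direction_e2 hB)].
Qed.

End GoodDirection.

Theorem proposition3p5
  (m : nat) (hm : (1 <= m)%nat)
  (phi : R -> R -> R) (hphi : smooth2 phi)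
  (C : R) (hC : 0 < C)
  (hD3 : forall x y, Dk_le 3 phi x y (C * norm2 x y ^ (2 * m - 1)))
  (hD2 : forall x y, Dk_le 2 phi x y (C * norm2 x y ^ (2 * m)))
  (hD1 : forall x y, Dk_le 1 phi x y (C * norm2 x y ^ (2 * m + 1)))
  (phixx phixy phiyy : R -> R -> R)
  (hxx : iter_partial (true :: true :: nil) phi phixx)
  (hxy : iter_partial (true :: false :: nil) phi phixy)
  (hyy : iter_partial (false :: false :: nil) phi phiyy) :
  exists C2 eps0 eps2, 1 < C2 /\ 0 < eps0 < 1 /\ 0 < eps2 < 1 /\
    forall x y, (x, y) <> (0, 0) ->
    exists u1 u2, norm2 u1 u2 = 1 /\
      forall r, 0 < r < eps0 * norm2 x y ->
        (forall p q,
           norm2 (p - (x + r / 2 * u1)) (q - (y + r / 2 * u2)) < eps2 * r ->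
           norm2 (p - x) (q - y) < r) /\
        (forall p q,
           norm2 (p - (x + r / 2 * u1)) (q - (y + r / 2 * u2)) < eps2 * r ->
           forall t' t'', 0 <= t' <= 1 -> 0 <= t'' <= 1 ->
           let x' := x + t' * (p - x) in let y' := y + t' * (q - y) in
           let x'' := x + t'' * (p - x) in let y'' := y + t'' * (q - y) in
           let n := norm2 x y in
           let M11 := phixx x' y' - 2 * INR m * n ^ (2 * m - 2) * x * y in
           let M12 := phixy x' y' - n ^ (2 * m - 2) * (n ^ 2 + 2 * INR m * y ^ 2) in
           let M21 := phixy x'' y'' + n ^ (2 * m - 2) * (n ^ 2 + 2 * INR m * x ^ 2) in
           let M22 := phiyy x'' y'' + 2 * INR m * n ^ (2 * m - 2) * x * y in
           / C2 * n ^ (2 * m) * r <=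
             norm2 (M11 * (p - x) + M12 * (q - y))
                   (M21 * (p - x) + M22 * (q - y))).
Proof.
  set (eps0 := / (16 * (C * 2 ^ (2 * m) + 1))).
  set (eps2 := / (8 * (C + INR m + 1))).
  assert (hCQ : 0 < C * 2 ^ (2 * m)) by (apply Rmult_lt_0_compat; [lra | apply pow_lt; lra]).
  pose proof (pos_INR m) as hm0.
  assert (heps0 : 0 < eps0 < 1).
  { split; [apply Rinv_0_lt_compat; lra | rewrite <- Rinv_1; apply Rinv_1_lt_contravar; lra]. }
  assert (heps2 : 0 < eps2 < 1).
  { split; [apply Rinv_0_lt_compat; lra | rewrite <- Rinv_1; apply Rinv_1_lt_contravar; lra]. }
  assert (heps2C : 8 * eps2 * (C + INR m + 1) = 1) by (unfold eps2; field; lra).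
  exists 8, eps0, eps2; split; [lra |]; split; [exact heps0 |]; split; [exact heps2 |].
  intros x y hz.
  assert (hn : 0 < norm2 x y) by now apply norm2_pos.
  assert (hosc : forall l g, length l = 2%nat -> iter_partial l phi g ->
            osc_le g x y (eps0 * norm2 x y) (norm2 x y ^ (2 * m) / 16)).
  { intros l g hl hg.
    exact (second_partial_osc_le m phi C l g x y hm (Rlt_le _ _ hC) (hphi 3%nat) hD3 hl hg hn). }
  apply (exists_good_direction m phixx phixy phiyy C eps0 eps2 x y hm); try lra.
  - apply (hD2 x y (true :: true :: nil)); [reflexivity | exact hxx].
  - apply (hD2 x y (false :: false :: nil)); [reflexivity | exact hyy].
  - apply (hosc (true :: true :: nil)); [reflexivity | exact hxx].
  - apply (hosc (true :: false :: nil)); [reflexivity | exact hxy].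
  - apply (hosc (false :: false :: nil)); [reflexivity | exact hyy].
Qed.
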